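(* Let $\mathfrak{k}$ be a field, $n\ge 2$, and ${\mathcal A}=(x_{i_1\ldots i_n})_{1\le i_j\le r_j}$ a box-shaped matrix of distinct indeterminates with polynomial ring $\mathfrak{k}[{\mathcal A}]$. Let $F\in\mathfrak{k}[{\mathcal A}]$. If for some entry $x_{i_1\ldots i_n}$ of ${\mathcal A}$ there is a positive integer $\lambda$ with $x_{i_1\ldots i_n}^\lambda F\in I_2({\mathcal A})$, then for every entry $x_{j_1\ldots j_n}$ of ${\mathcal A}$ there is a non-negative integer $\nu$ with $x_{j_1\ldots j_n}^\nu F\in I_2({\mathcal A})$.
   Context: $\mathfrak{k}$ is algebraically closed of characteristic $0$. The $2\times2$ minors of a box-shaped matrix $(a_{i_1\ldots i_n})$ are $a_{i_1\ldots i_l\ldots i_n}a_{j_1\ldots j_l\ldots j_n}-a_{i_1\ldots i_{l-1}j_li_{l+1}\ldots i_n}a_{j_1\ldots j_{l-1}i_lj_{l+1}\ldots j_n}$ for any coordinate $l$ and any two index points; $I_2({\mathcal A})$ is the ideal they generate. *)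

From HB Require Import structures.
From mathcomp Require Import all_boot all_order all_algebra.
From mathcomp Require Import mpoly.
Set Implicit Arguments. Unset Strict Implicit. Unset Printing Implicit Defensive.
Import GRing.Theory.
Local Open Scope ring_scope.

(* Index points of an n-dimensional box with side lengths r j:
   a point is (i_1,...,i_n) with i_j in 'I_(r j) (0-based). *)
Definition boxpt (n : nat) (r : 'I_n -> nat) : finType :=
  {dffun forall j : 'I_n, 'I_(r j)}.

Definition boxring (k : fieldType) (n : nat) (r : 'I_n -> nat) :=
  {mpoly k[#|boxpt r|]}.

Definition xvar (k : fieldType) (n : nat) (r : 'I_n -> nat) (p : boxpt r)
  : boxring k r := 'X_(enum_rank p).

Definition swapc (n : nat) (r : 'I_n -> nat) (a b : boxpt r) (l : 'I_n)
  : boxpt r := @finfun 'I_n (fun j => 'I_(r j)) (dfwith (fun j => a j) (b l)).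

Definition minor2 (k : fieldType) (n : nat) (r : 'I_n -> nat)
  (l : 'I_n) (a b : boxpt r) : boxring k r :=
  xvar k a * xvar k b - xvar k (swapc a b l) * xvar k (swapc b a l).

Definition is_minor2 (k : fieldType) (n : nat) (r : 'I_n -> nat)
  (g : boxring k r) : Prop :=
  exists l a b, g = minor2 k l a b.

Definition in_ideal_gen (R : comNzRingType) (G : R -> Prop) (F : R) : Prop :=
  exists s : seq (R * R), (forall q, q \in s -> G q.2) /\
    F = \sum_(q <- s) q.1 * q.2.

Definition I2 (k : fieldType) (n : nat) (r : 'I_n -> nat) (F : boxring k r)
  : Prop := in_ideal_gen (@is_minor2 k n r) F.

From HB Require Import structures.
From mathcomp Require Import all_boot all_order all_algebra.
From mathcomp Require Import mpoly ring.
Set Implicit Arguments. Unset Strict Implicit. Unset Printing Implicit Defensive.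
Import GRing.Theory.
Local Open Scope ring_scope.

(* Fix a box point b and put psi(b, c) := x_b * prod_j x_(b with j-th coordinate c_j).
   Along every coordinate l the indices of psi(b, c) are n copies of b_l and one c_l,
   so the substitution phi_b : x_c |-> psi(b, c) t kills every 2x2 minor.  Since
   k[A][t] is a domain and phi_b(x_a) <> 0, x_a^lam F in I_2 forces phi_b(F) = 0.
   On the other hand a chain of n minors gives x_b^n x_c = psi(b, c) mod I_2, so
   the substitution x_c |-> x_b^n x_c t agrees with phi_b modulo I_2 coefficientwise.
   Its t^d-coefficient is x_b^(nd) F_d, F_d the degree-d part of F; hence all the
   x_b^(nd) F_d lie in I_2, and so does x_b^(nD) F when F has degree < D. *)

Section PropIdeal.
Variable R : comRingType.

(* Prop-valued: MathComp's ideals are boolean predicates, but I_2 is a Prop. *)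
Definition ideal_closed (I : R -> Prop) :=
  [/\ I 0, forall x y, I x -> I y -> I (x + y) & forall c x, I x -> I (c * x)].

Definition eqmod (I : R -> Prop) (x y : R) := I (x - y).

Lemma in_ideal_gen_closed (G : R -> Prop) : ideal_closed (in_ideal_gen G).
Proof.
split.
- by exists [::]; rewrite big_nil.
- move=> _ _ [s [Gs ->]] [t [Gt ->]]; exists (s ++ t); rewrite big_cat.
  by split=> // q; rewrite mem_cat => /orP[/Gs|/Gt].
- move=> c _ [s [Gs ->]]; exists [seq (c * q.1, q.2) | q <- s]; split.
    by move=> _ /mapP[q /Gs Gq ->].
  by rewrite big_map mulr_sumr; apply: eq_bigr => q _; rewrite mulrA.
Qed.

Lemma in_ideal_gen_mem (G : R -> Prop) g : G g -> in_ideal_gen G g.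
Proof.
by move=> Gg; exists [:: (1, g)]; rewrite big_seq1 mul1r; split=> // q /[!inE] /eqP->.
Qed.

Variables (I : R -> Prop) (idealI : ideal_closed I).

Lemma ideal0 : I 0. Proof. by case: idealI. Qed.

Lemma idealD x y : I x -> I y -> I (x + y). Proof. by case: idealI => _ + _; apply. Qed.

Lemma idealMl c x : I x -> I (c * x). Proof. by case: idealI => _ _; apply. Qed.

Lemma ideal_sum (T : Type) (s : seq T) (P : pred T) (F : T -> R) :
  (forall i, P i -> I (F i)) -> I (\sum_(i <- s | P i) F i).
Proof.
move=> IF; elim/big_rec: _ => [|i x Pi Ix]; first exact: ideal0.
by apply: idealD => //; apply: IF.
Qed.

Lemma eqmod_refl x : eqmod I x x. Proof. by rewrite /eqmod subrr; exact: ideal0. Qed.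

Lemma eqmod_trans y x z : eqmod I x y -> eqmod I y z -> eqmod I x z.
Proof. by rewrite /eqmod => exy eyz; rewrite -(subrKA y); apply: idealD. Qed.

Lemma eqmodM x1 y1 x2 y2 :
  eqmod I x1 y1 -> eqmod I x2 y2 -> eqmod I (x1 * x2) (y1 * y2).
Proof.
rewrite /eqmod => e1 e2.
have -> : x1 * x2 - y1 * y2 = x2 * (x1 - y1) + y1 * (x2 - y2) by ring.
by apply: idealD; apply: idealMl.
Qed.

Lemma eqmodX x y e : eqmod I x y -> eqmod I (x ^+ e) (y ^+ e).
Proof.
move=> exy; elim: e => [|e IHe]; first by rewrite !expr0; exact: eqmod_refl.
by rewrite !exprS; apply: eqmodM.
Qed.

Lemma eqmod_prod (T : Type) (s : seq T) (F1 F2 : T -> R) :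
  (forall i, eqmod I (F1 i) (F2 i)) ->
  eqmod I (\prod_(i <- s) F1 i) (\prod_(i <- s) F2 i).
Proof.
move=> eF; elim: s => [|i s IHs]; first by rewrite !big_nil; exact: eqmod_refl.
by rewrite !big_cons; apply: eqmodM.
Qed.

Lemma eqmod_sum (T : Type) (s : seq T) (F1 F2 : T -> R) :
  (forall i, eqmod I (F1 i) (F2 i)) ->
  eqmod I (\sum_(i <- s) F1 i) (\sum_(i <- s) F2 i).
Proof. by move=> eF; rewrite /eqmod -sumrB; apply: ideal_sum => i _; apply: eF. Qed.

End PropIdeal.

Section CoefIdeal.
Variables (R : comRingType) (I : R -> Prop) (idealI : ideal_closed I).

Definition coef_ideal (p : {poly R}) := forall d, I p`_d.

Lemma coef_ideal_closed : ideal_closed coef_ideal.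
Proof.
split=> [d|p q Ip Iq d|c p Ip d]; first by rewrite coef0; exact: ideal0.
  by rewrite coefD; apply: idealD.
by rewrite coefM; apply: ideal_sum => // i _; apply: idealMl.
Qed.

Lemma eqmod_coefCX a b :
  eqmod I a b -> eqmod coef_ideal (a%:P * 'X) (b%:P * 'X).
Proof.
move=> eab; rewrite /eqmod -mulrBl -rmorphB mulrC.
apply: (idealMl coef_ideal_closed) => d; rewrite coefC.
by case: eqP => _; [exact: eab | exact: ideal0].
Qed.

End CoefIdeal.

(* Stated generically: rewriting with mulrACA inside {poly {mpoly R[N]}} makes
   unification of the ring structures diverge. *)
Lemma mulCX_sub_eq0 (S : comRingType) (a b c d : S) :
  a * b = c * d -> a%:P * 'X * (b%:P * 'X) - c%:P * 'X * (d%:P * 'X) = 0.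
Proof. by move=> e; rewrite mulrACA [X in _ - X]mulrACA -!polyCM e subrr. Qed.

Section HomogeneousSubstitution.
Variables (R : comRingType) (N : nat).

Definition mpolyCP : {rmorphism R -> {poly {mpoly R[N]}}} := (polyC \o @mpolyC N R)%FUN.

Definition tsubst (h : 'I_N -> {mpoly R[N]}) : {mpoly R[N]} -> {poly {mpoly R[N]}} :=
  mmap mpolyCP (fun i => (h i)%:P * 'X).

HB.instance Definition _ h := GRing.RMorphism.on (tsubst h).

Lemma tsubstX h i : tsubst h 'X_i = (h i)%:P * 'X.
Proof. by rewrite /tsubst mmapX mmap1U. Qed.

Lemma tsubst_binomial h i1 i2 i3 i4 : h i1 * h i2 = h i3 * h i4 ->
  tsubst h ('X_i1 * 'X_i2 - 'X_i3 * 'X_i4) = 0.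
Proof.
by move=> eh; rewrite rmorphB !rmorphM /= !tsubstX; exact: mulCX_sub_eq0.
Qed.

Lemma tsubst_eqmod (I : {mpoly R[N]} -> Prop) (h1 h2 : 'I_N -> {mpoly R[N]}) p :
  ideal_closed I -> (forall i, eqmod I (h1 i) (h2 i)) ->
  eqmod (coef_ideal I) (tsubst h1 p) (tsubst h2 p).
Proof.
move=> idealI eh; have idealJ := coef_ideal_closed idealI.
apply: (eqmod_sum idealJ) => m; apply: (eqmodM idealJ); first exact: eqmod_refl.
apply: (eqmod_prod idealJ) => i; apply: (eqmodX idealJ).
exact: eqmod_coefCX.
Qed.

Lemma coef_tsubst_scale (u p : {mpoly R[N]}) d :
  (tsubst (fun i => u * 'X_i) p)`_d = u ^+ d * pihomog mdeg d p.
Proof.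
rewrite /tsubst /mmap coef_sum pihomogE mulr_sumr [RHS]big_mkcond /=.
apply: eq_bigr => m _.
have monomialE : mmap1 (fun i => (u * 'X_i)%:P * 'X) m
                 = (u ^+ mdeg m * 'X_[m])%:P * 'X ^+ mdeg m.
  rewrite /mmap1 (eq_bigr (fun i => (u ^+ m i * 'X_i ^+ m i)%:P * 'X ^+ m i)).
    by rewrite big_split /= -rmorph_prod prodrXr big_split /= prodrXr -mpolyXE_id mdegE.
  by move=> i _; rewrite exprMn -rmorphXn exprMn.
rewrite monomialE /= mulrA -polyCM coefCM coefXn eq_sym.
by case: eqP => [->|_]; rewrite ?mulr1 ?mulr0 // -mul_mpolyC mulrCA.
Qed.

Lemma tsubst_scale_ideal (I : {mpoly R[N]} -> Prop) (u p : {mpoly R[N]}) :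
  ideal_closed I -> coef_ideal I (tsubst (fun i => u * 'X_i) p) ->
  I (u ^+ msize p * p).
Proof.
move=> idealI Ip; rewrite {2}(pihomog_partitionE (leqnn (msize p))) mulr_sumr.
apply: (ideal_sum idealI) => d _.
have -> : u ^+ msize p = u ^+ (msize p - d) * u ^+ d by rewrite -exprD subnK // ltnW.
rewrite -mulrA -coef_tsubst_scale.
exact: idealMl.
Qed.

End HomogeneousSubstitution.

Section Box.
Variables (k : fieldType) (n : nat) (r : 'I_n -> nat).
Implicit Types (a b c : boxpt r) (l : 'I_n).
Local Notation x := (@xvar k n r).
Local Notation I2 := (@I2 k n r).

Lemma swapc_eq a b l : swapc a b l l = b l.
Proof. by rewrite ffunE dfwith_in. Qed.

Lemma swapc_neq a b l j : l != j -> swapc a b l j = a j.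
Proof. by move=> lj; rewrite ffunE dfwith_out. Qed.

Lemma I2_closed : ideal_closed I2.
Proof. exact: in_ideal_gen_closed. Qed.

Lemma I2_minor2 l a b : I2 (minor2 k l a b).
Proof. by apply: in_ideal_gen_mem; exists l, a, b. Qed.

Lemma xvar_enum_val (i : 'I_#|boxpt r|) : x (enum_val i) = 'X_i.
Proof. by rewrite /xvar enum_valK. Qed.

Lemma xvar_neq0 c : x c != 0.
Proof.
apply/eqP => /(congr1 (mcoeff U_(enum_rank c))).
by rewrite mcoeffX eqxx mcoeff0 => /eqP; rewrite oner_eq0.
Qed.

Definition splice b c (m : nat) : boxpt r :=
  @finfun 'I_n (fun j => 'I_(r j)) (fun j => if (j < m)%N then c j else b j).

Lemma splice0 b c : splice b c 0 = b.
Proof. by apply/ffunP => j; rewrite ffunE. Qed.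

Lemma splice_all b c : splice b c n = c.
Proof. by apply/ffunP => j; rewrite ffunE ltn_ord. Qed.

Section SpliceStep.
Variables (b c : boxpt r) (j : 'I_n).

Lemma swapc_spliceS : swapc (splice b c j.+1) b j = splice b c j.
Proof.
apply/ffunP => i; have [<-|ji] := eqVneq j i; first by rewrite swapc_eq ffunE ltnn.
by rewrite swapc_neq // !ffunE ltnS leq_eqVlt val_eqE eq_sym (negbTE ji).
Qed.

Lemma swapc_spliceS_sym : swapc b (splice b c j.+1) j = swapc b c j.
Proof. by rewrite /swapc ffunE ltnSn. Qed.

Lemma prod_swapc_ltS :
  \prod_(i < n | (i < j.+1)%N) x (swapc b c i)
  = x (swapc b c j) * \prod_(i < n | (i < j)%N) x (swapc b c i).
Proof.
rewrite (bigD1 j) //=; congr (_ * _); apply: eq_bigl => i.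
rewrite ltnS leq_eqVlt val_eqE.
by case: eqVneq => [->|_]; rewrite ?ltnn ?andbT.
Qed.

End SpliceStep.

Lemma eqmod_splice b c (m : nat) : (m <= n)%N ->
  eqmod I2 (x b ^+ m * x (splice b c m))
           (x b * \prod_(j < n | (j < m)%N) x (swapc b c j)).
Proof.
elim: m => [|m IHm] le_mn.
  by rewrite splice0 big_pred0 // expr0 mul1r mulr1; exact: (eqmod_refl I2_closed).
pose j := Ordinal le_mn; have idealI2 := I2_closed.
have step : eqmod I2 (x (splice b c m.+1) * x b) (x (splice b c m) * x (swapc b c j)).
  have := I2_minor2 j (splice b c m.+1) b.
  by rewrite /minor2 (swapc_spliceS b c j) (swapc_spliceS_sym b c j).
rewrite (prod_swapc_ltS b c j) exprS -mulrA mulrCA [x b * x (splice _ _ _)]mulrC.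
apply: (eqmod_trans idealI2 (eqmodM idealI2 (eqmod_refl idealI2 (x b ^+ m)) step)).
rewrite [X in eqmod _ X _]mulrA [X in eqmod _ _ X]mulrCA [X in eqmod _ _ X]mulrC.
apply: (eqmodM idealI2); last exact: eqmod_refl.
exact: IHm (ltnW le_mn).
Qed.

Definition psi b c : boxring k r := x b * \prod_(j < n) x (swapc b c j).

Lemma eqmod_psi b c : eqmod I2 (x b ^+ n * x c) (psi b c).
Proof.
have := eqmod_splice b c (leqnn n); rewrite splice_all (eq_bigl predT) // => j.
by rewrite ltn_ord.
Qed.

Lemma psiM_swapc b l a c :
  psi b a * psi b c = psi b (swapc a c l) * psi b (swapc c a l).
Proof.
rewrite /psi mulrACA [RHS]mulrACA -!big_split /=; congr (_ * _).
apply: eq_bigr => j _; have [<-|lj] := eqVneq l j.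
  by rewrite /swapc !ffunE !dfwith_in mulrC.
by rewrite /swapc !ffunE !dfwith_out.
Qed.

Lemma psi_neq0 b c : psi b c != 0.
Proof.
by rewrite mulf_neq0 ?xvar_neq0 //; apply/prodf_neq0 => j _; exact: xvar_neq0.
Qed.

Definition psi_var b (i : 'I_#|boxpt r|) := psi b (enum_val i).

Lemma tsubst_psi_xvar b c : tsubst (psi_var b) (x c) = (psi b c)%:P * 'X.
Proof. by rewrite /xvar tsubstX /psi_var enum_rankK. Qed.

Lemma tsubst_psi_minor2 b l a c : tsubst (psi_var b) (minor2 k l a c) = 0.
Proof. by apply: tsubst_binomial; rewrite /psi_var !enum_rankK; exact: psiM_swapc. Qed.

Lemma tsubst_psi_I2 b g : I2 g -> tsubst (psi_var b) g = 0.
Proof.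
move=> [s [Gs ->]]; rewrite rmorph_sum big_seq big1 // => q /Gs[l [a [c ->]]].
by rewrite rmorphM /= tsubst_psi_minor2 mulr0.
Qed.

Lemma tsubst_psi_eq0 a b lam F : I2 (x a ^+ lam * F) -> tsubst (psi_var b) F = 0.
Proof.
have nz : (psi b a)%:P * 'X != 0 by rewrite mulf_neq0 ?polyC_eq0 ?psi_neq0 ?polyX_eq0.
move=> /(tsubst_psi_I2 b) /eqP; rewrite rmorphM rmorphXn /= tsubst_psi_xvar.
by rewrite mulf_eq0 (negbTE (expf_neq0 _ nz)) => /eqP.
Qed.

End Box.

Theorem lemma1p2 (k : fieldType) (n : nat) (r : 'I_n -> nat)
  (hn : (2 <= n)%N) (F : boxring k r) :
  (exists (p : boxpt r) (lam : nat), (0 < lam)%N /\ I2 (xvar k p ^+ lam * F)) ->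
  forall q : boxpt r, exists nu : nat, I2 (xvar k q ^+ nu * F).
Proof.
move=> [a [lam [_ IaF]]] b; have idealI2 := @I2_closed k n r.
have : eqmod (coef_ideal (@I2 k n r))
         (tsubst (fun i => xvar k b ^+ n * 'X_i) F) (tsubst (psi_var k b) F).
  apply: tsubst_eqmod idealI2 _ => i.
  by rewrite -xvar_enum_val; apply: eqmod_psi.
rewrite /eqmod (tsubst_psi_eq0 b IaF) subr0 => /(tsubst_scale_ideal idealI2).
by exists (n * msize F)%N; rewrite exprM.
Qed.
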